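(* Suppose that $K$ is algebraically closed and its residue class field $k$ has characteristic $p>0$. Then the set of equivalence classes of $K^\vee\setminus K$ under the relation $\sim$ is infinite.
   Context: $K$ is a complete non-archimedean non-trivially valued field which is not spherically complete; $K^\vee$ is a fixed spherically complete valued field which is an immediate extension of $K$. For $x,y\in K^\vee\setminus K$, $x\sim y$ means there exist $\lambda,\mu\in K$ with $|\lambda x+\mu-y|\le d(y,K)$, where $d(y,K)=\inf_{a\in K}|y-a|$; this is an equivalence relation on $K^\vee\setminus K$. *)

From HB Require Import structures.
From mathcomp Require Import all_boot all_order all_algebra.
From mathcomp Require Import boolp classical_sets functions cardinality reals.
Set Implicit Arguments. Unset Strict Implicit. Unset Printing Implicit Defensive.
Import Order.TTheory GRing.Theory Num.Theory.
Local Open Scope ring_scope.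
Local Open Scope classical_set_scope.

(* Convention: K^v is modelled as a field L carrying a real-valued absolute
   value [av], and K is modelled as a subfield of L given by a predicate. *)

Section ValuedFields.
Variables (R : realType) (L : fieldType) (av : L -> R).

Definition nonarch_abs : Prop :=
  [/\ forall x, 0 <= av x,
      forall x, av x = 0 <-> x = 0,
      forall x y, av (x * y) = av x * av y &
      forall x y, av (x + y) <= Num.max (av x) (av y)].

Definition is_subfield (K : set L) : Prop :=
  [/\ K 0, K 1,
      forall x y, K x -> K y -> K (x - y),
      forall x y, K x -> K y -> K (x * y) &
      forall x, K x -> x != 0 -> K x^-1].

Definition nontrivially_valued (K : set L) : Prop :=
  exists a, K a /\ a != 0 /\ av a != 1.

Definition complete_in (K : set L) : Prop :=
  forall u : nat -> L, (forall n, K (u n)) ->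
    (forall e : R, 0 < e -> exists N, forall m n, (N <= m)%N -> (N <= n)%N ->
        av (u m - u n) < e) ->
    exists2 l, K l & forall e : R, 0 < e -> exists N, forall n, (N <= n)%N ->
        av (u n - l) < e.

Definition cball (K : set L) (c : L) (r : R) : set L :=
  [set x | K x /\ av (x - c) <= r].

Definition spherically_complete (K : set L) : Prop :=
  forall (I : Type) (c : I -> L) (r : I -> R),
    (exists i : I, True) ->
    (forall i, K (c i)) -> (forall i, 0 < r i) ->
    (forall i j, cball K (c i) (r i) `<=` cball K (c j) (r j) \/
                 cball K (c j) (r j) `<=` cball K (c i) (r i)) ->
    exists2 x, K x & forall i, cball K (c i) (r i) x.

(* L is an immediate extension of K: same value group and same residue field *)
Definition immediate_ext (K : set L) : Prop :=
  (forall x, x != 0 -> exists2 a, K a & (a != 0 /\ av a = av x)) /\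
  (forall x, av x <= 1 -> exists2 a, K a & (av a <= 1 /\ av (x - a) < 1)).

Definition alg_closed_in (K : set L) : Prop :=
  forall p : {poly L}, (forall i, K p`_i) -> (1 < size p)%N ->
    exists2 x, K x & root p x.

(* the residue class field of K has characteristic p, p prime *)
Definition residue_char (p : nat) : Prop := prime p /\ av p%:R < 1.

Definition distK (K : set L) (y : L) : R := inf [set av (y - a) | a in K].

Definition simK (K : set L) (x y : L) : Prop :=
  exists l m, K l /\ K m /\ av (l * x + m - y) <= distK K y.

Definition simclass (K : set L) (x : L) : set L :=
  [set y | ~ K y /\ simK K x y].

Definition simclasses (K : set L) : set (set L) :=
  [set C | exists2 x, ~ K x & C = simclass K x].

End ValuedFields.

(* Pick x in K^v outside K (K^v <> K since K is not spherically complete) and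
   let d = d(x, K), which is positive because K is complete.  As K^v/K is
   immediate, d is not attained, and as K is algebraically closed every monic
   Q over K of degree N >= 1 splits into linear factors, whence |Q(x)| > d^N.
   Starting from X, if P is monic over K of degree N with d(P(x), K) <= d^N,
   take a in K close to P(x): since |p| < 1, the binomial expansion shows that
   (P - a)^p has the same property in degree N p.  This gives P_k of degree
   p^k; for j < k a relation |l P_j(x) + m - P_k(x)| <= d(P_k(x), K) would
   violate the lower bound for the monic P_k - l P_j - m, so the P_k(x) lie in
   pairwise distinct classes. *)

From HB Require Import structures.
From mathcomp Require Import all_boot all_order all_algebra.
From mathcomp Require Import boolp classical_sets functions cardinality reals.
From mathcomp Require Import zify ring lra.
Import Order.TTheory GRing.Theory Num.Theory.
Local Open Scope ring_scope.
Local Open Scope classical_set_scope.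

Section RealPowers.
Context {R : realFieldType}.
Implicit Types a b c h r X : R.

Lemma exprDr_le a h n : 0 <= a -> 0 <= h <= 1 ->
  (a + h) ^+ n <= a ^+ n + h * (n%:R * (a + 1) ^+ n).
Proof.
move=> a0 /andP[h0 h1]; elim: n => [|n IH]; first by rewrite !expr0 mul0r mulr0 addr0.
have an_ge0 : 0 <= a ^+ n := exprn_ge0 n a0.
have an_le : a ^+ n <= (a + 1) ^+ n by apply: lerXn2r; rewrite ?nnegrE; lra.
have n0 : 0 <= n%:R :> R := ler0n _ _.
rewrite !exprSr -[n.+1]addn1 natrD.
apply: le_trans (ler_wpM2r _ IH) _; first lra.
move: an_ge0 an_le; set X := a ^+ n; set Y := (a + 1) ^+ n => X0 XY.
have Y0 : 0 <= Y by lra.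
have slack_X : 0 <= h * (Y * a + (Y - X)) by apply: mulr_ge0 => //; nra.
have slack_h : 0 <= h * n%:R * Y * (1 - h) by rewrite !mulr_ge0 //; lra.
nra.
Qed.

Lemma exists_gt_expr_lt {a b n} : 0 <= a -> a ^+ n < b ->
  exists2 r, a < r & r ^+ n < b.
Proof.
move=> a0 anb; set C := n%:R * (a + 1) ^+ n; set e := b - a ^+ n.
have C0 : 0 <= C by rewrite mulr_ge0 // exprn_ge0 //; lra.
have e0 : 0 < e by rewrite subr_gt0.
have h0 : 0 < e / (e + C + 1) by rewrite divr_gt0 //; lra.
have h1 : e / (e + C + 1) <= 1 by rewrite ler_pdivrMr ?mul1r; lra.
exists (a + e / (e + C + 1)); first by rewrite ltrDl.
apply: le_lt_trans (@exprDr_le a (e / (e + C + 1)) n a0 _) _; first by rewrite (ltW h0) h1.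
by rewrite -ltrBrDl mulrAC ltr_pdivrMr -/e -/C; nra.
Qed.

Lemma ler_expr_of_gt {X a n} : 0 <= a -> (forall r, a < r -> X <= r ^+ n) ->
  X <= a ^+ n.
Proof.
move=> a0 hX; rewrite leNgt; apply/negP => /(exists_gt_expr_lt a0) [r ar rX].
by have := hX r ar; rewrite leNgt rX.
Qed.

Lemma exists_gt_mul_expr_le c a n : 0 <= c < 1 -> 0 < a ->
  exists2 r, a < r & c * r ^+ n <= a ^+ n.
Proof.
case/andP => c0 c1 a0; have an0 : 0 < a ^+ n := exprn_gt0 n a0.
have [->|cn0] := eqVneq c 0.
  by exists (a + 1); rewrite ?mul0r ?ltW //; lra.
have cp : 0 < c by rewrite lt_def cn0.
have [|r ar rn] := @exists_gt_expr_lt a (a ^+ n / c) n (ltW a0).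
  by rewrite ltr_pdivlMr //; nra.
by exists r => //; rewrite mulrC -ler_pdivlMr // ltW.
Qed.

End RealPowers.

Lemma monicB_size_lt (A : nzRingType) (P S : {poly A}) :
  P \is monic -> (size S < size P)%N -> P - S \is monic /\ size (P - S) = size P.
Proof.
move=> mP; rewrite -(size_polyN S) => sS.
by rewrite size_polyDl //; split=> //; apply/monicP; rewrite lead_coefDl ?(monicP mP).
Qed.

Section AbsValue.
Context {R : realType} {L : fieldType} {av : L -> R} (hav : nonarch_abs av).
Implicit Types (x y u c : L) (r : R).

Lemma av_ge0 x : 0 <= av x. Proof. by case: hav. Qed.
Lemma av_eq0 x : av x = 0 <-> x = 0. Proof. by case: hav. Qed.
Lemma avM x y : av (x * y) = av x * av y. Proof. by case: hav. Qed.
Lemma avD_le_max x y : av (x + y) <= Num.max (av x) (av y). Proof. by case: hav. Qed.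

Lemma av0 : av 0 = 0. Proof. exact/av_eq0. Qed.

Lemma av_gt0 x : x != 0 -> 0 < av x.
Proof. by move=> x0; rewrite lt_def av_ge0 andbT; apply: contra_neq x0 => /av_eq0. Qed.

Lemma av1 : av 1 = 1.
Proof.
have a1 : av 1 != 0 by apply/eqP => /av_eq0/eqP; rewrite oner_eq0.
by apply: (mulfI a1); rewrite -avM !mulr1.
Qed.

Lemma avN x : av (- x) = av x.
Proof.
have avN1 : av (-1) = 1.
  have : av (-1) ^+ 2 = 1 by rewrite expr2 -avM mulrNN mulr1 av1.
  move/eqP; rewrite sqrf_eq1 => /orP[/eqP //|/eqP avN1].
  by have := av_ge0 (-1); rewrite avN1 ler0N1.
by rewrite -mulN1r avM avN1 mul1r.
Qed.

Lemma avX x n : av (x ^+ n) = av x ^+ n.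
Proof. by elim: n => [|n IH]; rewrite ?expr0 ?av1 // !exprS avM IH. Qed.

Lemma avV x : av x^-1 = (av x)^-1.
Proof.
have [->|x0] := eqVneq x 0; first by rewrite invr0 av0 invr0.
have ax0 : av x != 0 by rewrite gt_eqF // av_gt0.
by apply: (mulfI ax0); rewrite -avM !divff // av1.
Qed.

Lemma avD_le {x y r} : av x <= r -> av y <= r -> av (x + y) <= r.
Proof. by move=> hx hy; apply: le_trans (avD_le_max x y) _; rewrite ge_max hx hy. Qed.

Lemma avB_le {x y r} : av x <= r -> av y <= r -> av (x - y) <= r.
Proof. by move=> hx hy; apply: avD_le; rewrite ?avN. Qed.

Lemma avD_lt {x y r} : av x < r -> av y < r -> av (x + y) < r.
Proof. by move=> hx hy; apply: le_lt_trans (avD_le_max x y) _; rewrite gt_max hx hy. Qed.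

Lemma av_sum_le (I : Type) (s : seq I) (P : pred I) (F : I -> L) r :
  0 <= r -> (forall i, P i -> av (F i) <= r) -> av (\sum_(i <- s | P i) F i) <= r.
Proof. by move=> r0 hF; elim/big_ind: _ => //; [rewrite av0 | move=> *; exact: avD_le]. Qed.

Lemma av_natr_le1 n : av n%:R <= 1.
Proof. by elim: n => [|n IH]; rewrite ?av0 // -addn1 natrD avD_le ?av1. Qed.

Lemma av_mulrn_dvd {m n} x : (m %| n)%N -> av (x *+ n) <= av m%:R * av x.
Proof.
case/dvdnP=> k ->; rewrite mulrnA -[X in av X]mulr_natr avM mulrC ler_wpM2l ?av_ge0 //.
by rewrite -mulr_natr avM ler_piMr ?av_ge0 ?av_natr_le1.
Qed.

(* Only the extreme terms of the binomial expansion of ((u - c) + c)^p escape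
   the factor p. *)
Lemma av_exprB_le {p u c r} : prime p -> av u <= r -> av c <= r ->
  av (u ^+ p - c ^+ p) <= Num.max (av (u - c) ^+ p) (av p%:R * r ^+ p.-1 * av (u - c)).
Proof.
move=> p_pr hu hc; have r0 : 0 <= r := le_trans (av_ge0 u) hu.
have he : av (u - c) <= r by apply: avB_le.
move: (u - c) he (subrK c u) => e he <-.
rewrite [e + c]addrC exprDn big_ord_recl subn0 expr0 mulr1 bin0 mulr1n addrAC subrr add0r.
apply: av_sum_le => [|i _]; first by rewrite le_max exprn_ge0 ?av_ge0.
rewrite lift0.
have [ip|ip] := eqVneq i.+1 p.
  by rewrite ip subnn binn expr0 mul1r mulr1n avX le_max lexx.
have p_dvd : (p %| 'C(p, i.+1))%N.
  by apply: prime_dvd_bin; rewrite //= ltn_neqAle ip ltn_ord.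
apply: le_trans (av_mulrn_dvd _ p_dvd) _; rewrite le_max -mulrA; apply/orP; right.
rewrite ler_wpM2l ?av_ge0 // avM !avX.
have -> : p.-1 = (p - i.+1 + i)%N by have := ltn_ord i; lia.
rewrite exprD -mulrA exprSr; apply: ler_pM; rewrite ?mulr_ge0 ?exprn_ge0 ?av_ge0 //.
  by apply: lerXn2r; rewrite ?nnegrE ?av_ge0.
by apply: ler_wpM2r; rewrite ?av_ge0 //; apply: lerXn2r; rewrite ?nnegrE ?av_ge0.
Qed.

Section Subfield.
Context {K : set L} (hK : is_subfield K).

Lemma distK_ge0 y : 0 <= distK av K y.
Proof.
case: hK => K0 _ _ _ _; apply: lb_le_inf; first by exists (av (y - 0)), 0.
by move=> _ [a _ <-]; apply: av_ge0.
Qed.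

Lemma distK_le {y a} : K a -> distK av K y <= av (y - a).
Proof. by move=> Ka; apply: ge_inf; [exists 0 => _ [b _ <-]; apply: av_ge0 | exists a]. Qed.

Lemma distK_lt {y r} : distK av K y < r -> exists2 a, K a & av (y - a) < r.
Proof.
case: hK => K0 _ _ _ _.
by move=> /(inf_lt (ex_intro _ _ (ex_intro2 _ _ 0 K0 erefl))) [_ [a Ka <-]]; exists a.
Qed.

Lemma simK_refl y : simK av K y y.
Proof.
case: hK => K0 K1 _ _ _; exists 1, 0; split=> //; split=> //.
by rewrite mul1r addr0 subrr av0 distK_ge0.
Qed.

(* K as a boolean predicate, so that MathComp's [polyOver] applies. *)
Definition memK : {pred L} := fun x => `[< K x >].

Lemma memKP x : reflect (K x) (x \in memK). Proof. exact: asboolP. Qed.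

Lemma memK_subring_closed : GRing.subring_closed memK.
Proof.
case: hK => K0 K1 KB KM _; split; first exact/memKP.
  by move=> x y /memKP Kx /memKP Ky; apply/memKP/KB.
by move=> x y /memKP Kx /memKP Ky; apply/memKP/KM.
Qed.

HB.instance Definition _ := GRing.isSubringClosed.Build L memK memK_subring_closed.

Lemma polyOver_mulXsubC q g : g \in memK ->
  q * ('X - g%:P) \is a polyOver memK -> q \is a polyOver memK.
Proof.
move=> Kg /polyOverP Kqg; apply/polyOverP.
suff Kq k j : (size q <= j + k)%N -> q`_j \in memK.
  by move=> j; apply: (Kq (size q)); rewrite leq_addl.
elim: k j => [|k IH] j hj; first by rewrite nth_default ?rpred0 // -[j]addn0.
have -> : q`_j = (q * ('X - g%:P))`_j.+1 + q`_j.+1 * g.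
  by rewrite mulrBr coefB coefMX coefMC /= addrNK.
by rewrite rpredD ?rpredM // IH // addSnnS.
Qed.

Context (halg : alg_closed_in K) (himm : immediate_ext av K).

Lemma monic_polyOver_factor {n Q} : Q \is monic -> Q \is a polyOver memK ->
  size Q = n.+2 -> exists g q, [/\ K g, q \is monic, q \is a polyOver memK,
                                   size q = n.+1 & Q = q * ('X - g%:P)].
Proof.
move=> mQ /[dup] KQ /polyOverP KQi sQ.
have [|g Kg /factor_theorem [q defQ]] := halg Q (fun i => elimT (memKP _) (KQi i)).
  by rewrite sQ.
have mq : q \is monic by rewrite -(monicMr q (monicXsubC g)) -defQ.
exists g, q; split => //.
- by apply: (@polyOver_mulXsubC _ g); [apply/memKP | rewrite -defQ].
- by move: sQ; rewrite defQ size_Mmonic ?monic_neq0 ?monicXsubC // size_XsubC addn2 => -[].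
Qed.

Section Hole.
Context {x : L} (hx : ~ K x).

Local Notation d := (distK av K x).

Lemma distK_gt0 : complete_in av K -> 0 < d.
Proof.
move=> hcomp; rewrite lt_def distK_ge0 // andbT; apply/eqP => d0.
have approx n : exists a, K a /\ av (x - a) < n.+1%:R^-1.
  by have [|a Ka xa] := @distK_lt x n.+1%:R^-1; [rewrite d0 invr_gt0 ltr0Sn | exists a].
have [u /all_and2 [Ku xu]] := choice approx.
have u_cvg (e : R) : 0 < e -> exists N, forall n, (N <= n)%N -> av (x - u n) < e.
  move=> e0; exists (Num.Def.archi_bound e^-1) => n Nn; apply: lt_trans (xu n) _.
  rewrite -[e]invrK ltf_pV2 ?posrE ?invr_gt0 ?ltr0Sn //.
  by apply: lt_le_trans (archi_boundP _) _; rewrite ?invr_ge0 ?ltW // ltr_nat ltnS.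
have [|l Kl ul] := hcomp u Ku.
  move=> r /u_cvg [N uN]; exists N => m n mN nN.
  have -> : u m - u n = - (x - u m) + (x - u n) by ring.
  by apply: avD_lt; rewrite ?avN; apply: uN.
apply: hx; suff /av_eq0/eqP : av (x - l) = 0 by rewrite subr_eq0 => /eqP ->.
apply/eqP; rewrite eq_le av_ge0 // andbT leNgt; apply/negP => /[dup] e0.
move=> /u_cvg [N1 uN1]; have [N2 uN2] := ul _ e0.
have := avD_lt (uN1 _ (leq_maxl N1 N2)) (uN2 _ (leq_maxr N1 N2)).
by rewrite addrA subrK ltxx.
Qed.

(* Were d attained at g, the immediate extension would provide b c in K with
   |x - g - b c| < |b| = |x - g|. *)
Lemma distK_lt_av g : K g -> d < av (x - g).
Proof.
move=> Kg; rewrite lt_def distK_le // andbT; apply/eqP => d_eq.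
have xg0 : x - g != 0 by rewrite subr_eq0; apply/eqP => xg; apply: hx; rewrite xg.
case: himm => [same_values same_residues].
have [b Kb [b0 bxg]] := same_values _ xg0.
have [|c Kc [_ hc]] := same_residues ((x - g) / b).
  by rewrite avM avV bxg divff // gt_eqF // av_gt0.
have : av (x - (g + b * c)) < d.
  have -> : x - (g + b * c) = b * ((x - g) / b - c).
    by rewrite mulrBr mulrCA divff // mulr1 opprD addrA.
  by rewrite avM -d_eq -bxg -[ltRHS]mulr1 ltr_pM2l ?av_gt0.
by rewrite ltNge distK_le //; apply/memKP; rewrite rpredD ?rpredM //; apply/memKP.
Qed.

Lemma monic_horner_lower_bound {n Q} : Q \is monic -> Q \is a polyOver memK ->
  size Q = n.+1 -> exists2 m, d < m & m ^+ n <= av Q.[x].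
Proof.
have d0 : 0 <= d := distK_ge0 x.
elim: n Q => [|n IH] Q mQ KQ sQ.
  exists (d + 1); first by rewrite ltrDl.
  have lcQ := monicP mQ; rewrite lead_coefE sQ in lcQ.
  by rewrite (size1_polyC (eq_leq sQ)) hornerC lcQ av1.
have [g [q [Kg mq Kq sq ->]]] := monic_polyOver_factor mQ KQ sQ.
have [m dm hm] := IH q mq Kq sq.
have m0 : 0 <= Num.min m (av (x - g)) by rewrite le_min av_ge0 (le_trans d0 (ltW dm)).
exists (Num.min m (av (x - g))); first by rewrite lt_min dm distK_lt_av.
rewrite hornerM hornerXsubC avM exprSr; apply: ler_pM; rewrite ?exprn_ge0 ?ge_min ?lexx ?orbT //.
apply: le_trans hm; apply: lerXn2r; rewrite ?nnegrE ?ge_min ?lexx //.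
exact: le_trans d0 (ltW dm).
Qed.

Definition extremal N P := [/\ P \is monic, P \is a polyOver memK, size P = N.+1 &
  distK av K P.[x] <= d ^+ N].

Lemma extremal_horner_lt {N P Q} : extremal N P -> (0 < N)%N ->
  Q \is monic -> Q \is a polyOver memK -> size Q = N.+1 -> distK av K P.[x] < av Q.[x].
Proof.
case=> _ _ _ dP N0 mQ KQ sQ; have [m dm mQx] := monic_horner_lower_bound mQ KQ sQ.
have d0 : 0 <= d := distK_ge0 x.
apply: le_lt_trans dP (lt_le_trans _ mQx).
by rewrite ltrXn2r ?nnegrE -?lt0n // (le_trans d0 (ltW dm)).
Qed.

Lemma extremal_notin {N P} : extremal N P -> (0 < N)%N -> ~ K P.[x].
Proof.
move=> /[dup] eP [mP KP sP _] N0 KPx.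
have [|mQ sQ] := @monicB_size_lt _ P P.[x]%:P mP.
  by rewrite sP ltnS (leq_trans (size_polyC_leq1 _)).
have KQ : P - P.[x]%:P \is a polyOver memK by rewrite rpredB ?polyOverC //; apply/memKP.
have := extremal_horner_lt eP N0 mQ KQ (etrans sQ sP).
by rewrite hornerD hornerN hornerC subrr av0 ltNge distK_ge0.
Qed.

Lemma extremal_not_simK {M N P Q} : extremal M P -> extremal N Q -> (M < N)%N ->
  ~ simK av K P.[x] Q.[x].
Proof.
move=> [_ KP sP _] eQ MN [l [m [Kl [Km hlm]]]]; case: (eQ) => mQ KQ sQ _.
set S := l *: P + m%:P.
have KS : S \is a polyOver memK.
  by rewrite rpredD ?polyOverZ ?polyOverC //; apply/memKP.
have [|mQS sQS] := @monicB_size_lt _ Q S mQ.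
  apply: leq_ltn_trans (size_polyD _ _) _; rewrite sQ ltnS geq_max.
  rewrite (leq_trans (size_scale_leq _ _)) ?sP //.
  by rewrite (leq_trans (size_polyC_leq1 _)) // (leq_ltn_trans (leq0n M) MN).
have := extremal_horner_lt eQ (leq_ltn_trans (leq0n M) MN) mQS (rpredB KQ KS) (etrans sQS sQ).
by rewrite hornerD hornerN hornerD hornerZ hornerC -avN opprB ltNge hlm.
Qed.

Lemma extremal_simclass_neq {M N P Q} : extremal M P -> extremal N Q -> (M < N)%N ->
  simclass av K P.[x] <> simclass av K Q.[x].
Proof.
move=> eP eQ MN PQ; have : simclass av K Q.[x] Q.[x].
  by split; [apply: extremal_notin eQ (leq_ltn_trans (leq0n _) MN) | apply: simK_refl].
by rewrite -PQ => -[_]; apply: extremal_not_simK eP eQ MN.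
Qed.

Lemma extremal_simclass_inj {M N P Q} : extremal M P -> extremal N Q ->
  simclass av K P.[x] = simclass av K Q.[x] -> M = N.
Proof.
move=> eP eQ PQ; have [MN|NM|//] := ltngtP M N.
- by case: (extremal_simclass_neq eP eQ MN PQ).
- by case: (extremal_simclass_neq eQ eP NM (esym PQ)).
Qed.

Section Frobenius.
Context {p : nat} (p_pr : prime p) (p_small : av p%:R < 1) (d_gt0 : 0 < d).

Lemma extremal_mulp {N P} : (0 < N)%N -> extremal N P -> exists Q, extremal (N * p) Q.
Proof.
move=> N0 [mP KP sP dP]; set D := d ^+ N.
have D0 : 0 < D := exprn_gt0 N d_gt0.
(* The margin r ensures the middle binomial terms of ((P - a)(x))^p stay small. *)
have [|r Dr pr] := @exists_gt_mul_expr_le _ (av p%:R) D p.-1 _ D0.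
  by rewrite av_ge0 p_small.
have [a Ka Pa] := distK_lt (le_lt_trans dP Dr).
have [|mPa sPa] := @monicB_size_lt _ P a%:P mP.
  by rewrite sP ltnS (leq_trans (size_polyC_leq1 _)).
exists ((P - a%:P) ^+ p); split.
- exact: monic_exp.
- by rewrite rpredX // rpredB ?polyOverC //; apply/memKP.
- have := size_exp (P - a%:P) p; rewrite sPa sP /= => <-.
  by rewrite prednK // size_poly_gt0 monic_neq0 // monic_exp.
rewrite exprM; apply: ler_expr_of_gt => [|s Ds]; first exact: ltW.
have s0 : 0 <= s by rewrite ltW // (lt_trans D0).
have r0 : 0 <= r by rewrite ltW // (lt_trans D0).
have [b Kb Pb] := distK_lt (le_lt_trans dP Ds).
rewrite horner_exp hornerD hornerN hornerC; set u := P.[x] - a; set c := b - a.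
have Kc : c \in memK by rewrite rpredB //; apply/memKP.
have Kcp : K (c ^+ p) by apply/memKP; rewrite rpredX.
apply: le_trans (distK_le Kcp) _.
have ucs : av (u - c) <= s by rewrite /u /c opprB addrA subrK ltW.
have uM : av u <= Num.max r s by rewrite le_max ltW.
have cM : av c <= Num.max r s.
  by rewrite -(subKr u c); apply: avB_le => //; rewrite le_max ucs orbT.
apply: le_trans (av_exprB_le p_pr uM cM) _; rewrite ge_max.
rewrite lerXn2r ?nnegrE ?av_ge0 ?prime_gt0 //=.
rewrite -[X in _ <= s ^+ X](prednK (prime_gt0 p_pr)) exprSr.
apply: ler_pM; rewrite ?av_ge0 //.
  by rewrite mulr_ge0 ?exprn_ge0 ?av_ge0 // le_max r0.
have [_|sr] := leP r s; first by rewrite ler_piMl ?exprn_ge0 ?(ltW p_small).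
apply: le_trans pr _.
by apply: lerXn2r; rewrite ?nnegrE ?(ltW D0) ?(ltW Ds).
Qed.

Lemma extremal_expn k : exists P, extremal (p ^ k) P.
Proof.
elim: k => [|k [P eP]]; last first.
  by rewrite expnSr; apply: extremal_mulp eP; rewrite expn_gt0 prime_gt0.
exists 'X; split; rewrite ?monicX ?polyOverX ?size_polyX ?hornerX ?expr1 //.
Qed.

End Frobenius.

Lemma infinite_simclasses {p} : complete_in av K -> prime p -> av p%:R < 1 ->
  infinite_set (simclasses av K).
Proof.
move=> hcomp p_pr p_small.
have [F eF] := choice (extremal_expn p_pr p_small (distK_gt0 hcomp)).
apply/infiniteP/pcard_leP/injfunPex; exists (fun k => simclass av K (F k).[x]).
  move=> k _; exists (F k).[x] => //.
  by apply: (extremal_notin (eF k)); rewrite expn_gt0 prime_gt0.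
move=> j k _ _ /(extremal_simclass_inj (eF j) (eF k)).
exact/expnI/prime_gt1.
Qed.

End Hole.

End Subfield.

End AbsValue.

Theorem mainTheorem5 (R : realType) (L : fieldType) (av : L -> R)
  (K : set L) (p : nat) :
  nonarch_abs av ->
  is_subfield K ->
  nontrivially_valued av K ->
  complete_in av K ->
  ~ spherically_complete av K ->
  spherically_complete av setT ->
  immediate_ext av K ->
  alg_closed_in K ->
  residue_char av p ->
  infinite_set (simclasses av K).
Proof.
move=> hav hK _ hcomp not_sc sc himm halg [p_pr p_small].
have [x hx] : exists x, ~ K x.
  apply/existsNP => allK; apply: not_sc.
  by have -> : K = setT by apply/seteqP; split=> // y _; apply: allK.
exact: (infinite_simclasses hav hK halg himm hx hcomp p_pr p_small).
Qed.
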